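(* Stable semantics is serialisable with the selection function $\alpha_{adm}(X,Y,Z)=X\cup Y\cup Z$ and the termination function $\beta_{st}(F,S)=1$ if $F=(\emptyset,\emptyset)$ and $\beta_{st}(F,S)=0$ otherwise.
   Context: An abstract argumentation framework (AF) is a pair $F=(A,R)$ with $A$ a finite subset of a fixed universal set of arguments $\mathfrak{A}$ and $R\subseteq A\times A$ ($a\to b$ means $(a,b)\in R$). For $S\subseteq A$: $S^+=\{a\mid \exists b\in S: b\to a\}$, $S^-=\{a\mid\exists b\in S: a\to b\}$; for sets $S,S'$, $S\to S'$ means $S^+\cap S'\neq\emptyset$. $S$ is admissible if it is conflict-free and every attacker of an element of $S$ is attacked by some element of $S$. A stable extension is an admissible set $E$ with $E\cup E^+=A$. An initial set is a non-empty admissible set with no non-empty admissible proper subset; $\mathrm{IS}(F)$ is the set of initial sets. An initial set $S$ is unattacked if $S^-=\emptyset$; unchallenged if $S^-\neq\emptyset$ and no $S'\in\mathrm{IS}(F)$ has $S'\to S$; challenged if some $S'\in\mathrm{IS}(F)$ has $S'\to S$. Write $\mathrm{IS}^{u}(F),\mathrm{IS}^{uc}(F),\mathrm{IS}^{c}(F)$ for these sets. The reduct is $F^S=(A',R\cap(A'\times A'))$ with $A'=A\setminus(S\cup S^+)$. A selection function $\alpha$ maps any three sets $X,Y,Z$ of sets of arguments to a subset of $X\cup Y\cup Z$; a termination function $\beta$ maps pairs $(F,S)$ to $\{0,1\}$. Transitions: $(F,S)\to(F^{S'},S\cup S')$ whenever $S'\in\alpha(\mathrm{IS}^u(F),\mathrm{IS}^{uc}(F),\mathrm{IS}^c(F))$.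 $(F,S)\leadsto^{\alpha,\beta}(F',S')$ means $(F',S')$ is reachable from $(F,S)$ in finitely many (possibly zero) transitions and $\beta(F',S')=1$. $\mathcal{E}^{\alpha,\beta}(F)$ is the set of all $S$ with $(F,\emptyset)\leadsto^{\alpha,\beta}(F',S)$ for some $F'$. A semantics $\sigma$ is serialisable with $\alpha,\beta$ if $\sigma(F)=\mathcal{E}^{\alpha,\beta}(F)$ for all AFs $F$. *)

From HB Require Import structures.
From mathcomp Require Import all_boot finmap.
From Stdlib Require Import Relations.Relation_Operators.

Set Implicit Arguments.
Unset Strict Implicit.
Unset Printing Implicit Defensive.

Local Open Scope fset_scope.

Section AF.
Variable T : choiceType.

Definition AF := ({fset T} * {fset (T * T)})%type.

Definition args (F : AF) : {fset T} := F.1.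
Definition atts (F : AF) : {fset (T * T)} := F.2.

Definition wf_AF (F : AF) : Prop :=
  forall p, p \in atts F -> (p.1 \in args F) && (p.2 \in args F).

Definition plus (F : AF) (S : {fset T}) : {fset T} :=
  [fset p.2 | p in atts F & p.1 \in S].
Definition minus (F : AF) (S : {fset T}) : {fset T} :=
  [fset p.1 | p in atts F & p.2 \in S].

Definition attacks_set (F : AF) (S S' : {fset T}) : Prop :=
  plus F S `&` S' != fset0.

Definition conflict_free (F : AF) (S : {fset T}) : Prop :=
  S `<=` args F /\
  forall a b, a \in S -> b \in S -> (a, b) \notin atts F.

Definition admissible (F : AF) (S : {fset T}) : Prop :=
  conflict_free F S /\
  forall a b, b \in S -> (a, b) \in atts F -> a \in plus F S.

Definition stable (F : AF) (E : {fset T}) : Prop :=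
  admissible F E /\ E `|` plus F E = args F.

Definition initial (F : AF) (S : {fset T}) : Prop :=
  S != fset0 /\ admissible F S /\
  forall S', S' `<` S -> S' != fset0 -> ~ admissible F S'.

Definition IS_u (F : AF) (S : {fset T}) : Prop :=
  initial F S /\ minus F S = fset0.
Definition IS_uc (F : AF) (S : {fset T}) : Prop :=
  initial F S /\ minus F S != fset0 /\
  ~ (exists S', initial F S' /\ attacks_set F S' S).
Definition IS_c (F : AF) (S : {fset T}) : Prop :=
  initial F S /\ exists S', initial F S' /\ attacks_set F S' S.

Definition reduct (F : AF) (S : {fset T}) : AF :=
  let A' := args F `\` (S `|` plus F S) in
  (A', [fset p in atts F | (p.1 \in A') && (p.2 \in A')]).

Definition setset := {fset T} -> Prop.

Definition selection := setset -> setset -> setset -> setset.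
Definition is_selection (alpha : selection) : Prop :=
  forall X Y Z S, alpha X Y Z S -> X S \/ Y S \/ Z S.

Definition termination := AF -> {fset T} -> bool.

Definition step (alpha : selection) (c c' : AF * {fset T}) : Prop :=
  exists S', alpha (IS_u c.1) (IS_uc c.1) (IS_c c.1) S' /\
             c' = (reduct c.1 S', c.2 `|` S').

Definition reaches (alpha : selection) := clos_refl_trans _ (step alpha).

Definition E_ab (alpha : selection) (beta : termination) (F : AF)
    (S : {fset T}) : Prop :=
  exists F', reaches alpha (F, fset0) (F', S) /\ beta F' S.

Definition semantics := AF -> {fset T} -> Prop.

Definition serialisable (sigma : semantics) (alpha : selection)
    (beta : termination) : Prop :=
  forall F, wf_AF F -> forall S, sigma F S <-> E_ab alpha beta F S.

Definition alpha_adm : selection := fun X Y Z S => X S \/ Y S \/ Z S.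

Definition beta_st : termination := fun F _ => F == (fset0, fset0).

End AF.

(* Along a run from (F, {}), the current framework is always the reduct F^E of
   F by the union E of the initial sets chosen so far, because reducts compose:
   (F^E)^S = F^(E u S).  E stays admissible, since an admissible set of F^E
   added to an admissible set E of F is admissible in F.  The run stops at the
   empty framework exactly when E u E^+ covers all arguments, i.e. when E is
   stable.  Conversely, for a stable S and E included in S, the set S \ E is
   stable in F^E, hence nonempty unless F^E is empty; any initial set of F^E
   inside S \ E can be chosen next, so the run can be steered to (empty, S). *)

From mathcomp Require Import all_boot finmap.
From Stdlib Require Import Classical Relations.Relation_Operators.

Local Open Scope fset_scope.

Lemma fproperD_neq0 {K : choiceType} {A B : {fset K}} :
  B `<=` A -> B != fset0 -> A `\` B `<` A.
Proof.
move=> BA /fset0Pn [y yB]; apply: (@fsub_proper_trans _ (A `\ y)).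
  by apply: fsetDS; rewrite fsub1set.
exact/fproperD1/(fsubsetP BA).
Qed.

Section Serialisation.
Set Implicit Arguments.
Unset Strict Implicit.
Variable T : choiceType.
Implicit Types (F G : AF T) (S E X : {fset T}) (x : T).

Lemma AF_eq F G : args F = args G -> atts F = atts G -> F = G.
Proof. by case: F G => [A R] [A' R'] /= -> ->. Qed.

Lemma mem_plus F S x :
  reflect (exists2 a, a \in S & (a, x) \in atts F) (x \in plus F S).
Proof.
apply: (iffP idP) => [/imfsetP [[a b]] /=|[a aS ax]].
  by rewrite inE => /andP [ab aS] ->; exists a.
by apply/imfsetP; exists (a, x); rewrite //= inE ax.
Qed.

Lemma plus0 F : plus F fset0 = fset0.
Proof. by apply/fsetP => x; rewrite inE; apply/mem_plus => -[a]; rewrite inE. Qed.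

Lemma plusU F S E : plus F (S `|` E) = plus F S `|` plus F E.
Proof.
apply/fsetP => x; rewrite in_fsetU; apply/mem_plus/orP.
  by case=> a /fsetUP [] aS ax; [left|right]; apply/mem_plus; exists a.
by case=> /mem_plus [a aS ax]; exists a; rewrite // in_fsetU aS ?orbT.
Qed.

Lemma plus_sub_args F S : wf_AF F -> plus F S `<=` args F.
Proof. by move=> wf; apply/fsubsetP => x /mem_plus [a _ /wf /andP []]. Qed.

Lemma mem_args_reduct F S x :
  (x \in args (reduct F S)) = [&& x \in args F, x \notin S & x \notin plus F S].
Proof. by rewrite in_fsetD in_fsetU negb_or andbC. Qed.

Lemma mem_atts_reduct F S p :
  (p \in atts (reduct F S)) =
  [&& p \in atts F, p.1 \in args (reduct F S) & p.2 \in args (reduct F S)].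
Proof. by rewrite !inE. Qed.

Lemma args_reduct_sub F S : args (reduct F S) `<=` args F.
Proof. exact: fsubsetDl. Qed.

Lemma wf_reduct F S : wf_AF (reduct F S).
Proof. by move=> p; rewrite mem_atts_reduct => /and3P [_ -> ->]. Qed.

Lemma reduct0 F : wf_AF F -> reduct F fset0 = F.
Proof.
move=> wf; have eA : args (reduct F fset0) = args F.
  by apply/fsetP => x; rewrite mem_args_reduct plus0 !inE andbT.
apply: AF_eq => //; apply/fsetP => p; rewrite mem_atts_reduct eA.
by apply/idP/idP => [/and3P [] //|pF]; rewrite pF wf.
Qed.

Lemma reduct_eq0 F S : args (reduct F S) = fset0 -> reduct F S = (fset0, fset0).
Proof.
move=> eA; apply: AF_eq => //; apply/fsetP => p /=.
by rewrite mem_atts_reduct eA !inE !andbF.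
Qed.

Lemma plus_reduct F E S x : S `<=` args (reduct F E) -> x \in args (reduct F E) ->
  (x \in plus (reduct F E) S) = (x \in plus F S).
Proof.
move=> /fsubsetP SE xE; apply/mem_plus/mem_plus => -[a aS ax]; exists a => //.
  by move: ax; rewrite mem_atts_reduct => /andP [].
by rewrite mem_atts_reduct ax xE SE.
Qed.

Lemma reduct_reduct F E S : S `<=` args (reduct F E) ->
  reduct (reduct F E) S = reduct F (E `|` S).
Proof.
move=> SE; have eA : args (reduct (reduct F E) S) = args (reduct F (E `|` S)).
  apply/fsetP => x; rewrite mem_args_reduct [RHS]mem_args_reduct plusU !in_fsetU !negb_or.
  case: (boolP (x \in args (reduct F E))) => [xE|].
    by rewrite plus_reduct //; move: xE; rewrite mem_args_reduct => /and3P [-> -> ->].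
  rewrite mem_args_reduct => xE; apply/esym/negbTE; apply: contra xE.
  by case/and4P => -> /andP [-> _] -> _.
apply: AF_eq => //; apply/fsetP => p.
rewrite [RHS]mem_atts_reduct -eA mem_atts_reduct mem_atts_reduct.
have sub := fsubsetP (args_reduct_sub (reduct F E) S).
apply/and3P/and3P => [[/and3P [pF _ _] p1 p2] | [pF p1 p2]]; first by split.
by rewrite pF !sub.
Qed.

Lemma admissible0 F : admissible F fset0.
Proof. by split; [split=> [|a b]; rewrite ?fsub0set ?inE | move=> a b; rewrite inE]. Qed.

Lemma admissibleU_reduct F E S : wf_AF F ->
  admissible F E -> admissible (reduct F E) S -> admissible F (E `|` S).
Proof.
move=> wf [[EA Ecf] Edef] [[SA Scf] Sdef].
have SR x : x \in S -> [&& x \in args F, x \notin E & x \notin plus F E].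
  by move=> xS; rewrite -mem_args_reduct (fsubsetP SA).
split; [split|].
- by rewrite fsubUset EA (fsubset_trans SA (args_reduct_sub _ _)).
- move=> a b /fsetUP [aE|aS] /fsetUP [bE|bS].
  + exact: Ecf.
  + have /and3P [_ _ bE'] := SR b bS; apply: contra bE' => ab.
    by apply/mem_plus; exists a.
  + by have /and3P [_ _ aE'] := SR a aS; apply: contra aE'; apply: Edef bE.
  + apply/negP => ab; apply: (negP (Scf a b aS bS)).
    by rewrite mem_atts_reduct ab !(fsubsetP SA).
- move=> a b /fsetUP [bE|bS] ab; rewrite plusU in_fsetU; first by rewrite (Edef a b).
  case aE': (a \in plus F E) => //=.
  have /and3P [_ _ bE'] := SR b bS.
  have aE : a \notin E by apply: contra bE' => aE; apply/mem_plus; exists a.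
  have aR : a \in args (reduct F E).
    by case/andP: (wf _ ab) => aF _; rewrite mem_args_reduct aF aE aE'.
  have abR : (a, b) \in atts (reduct F E).
    by rewrite mem_atts_reduct ab aR (fsubsetP SA).
  have /mem_plus [c cS] := Sdef a b bS abR.
  by rewrite mem_atts_reduct => /andP [ca _]; apply/mem_plus; exists c.
Qed.

Lemma diff_sub_args_reduct F S E : conflict_free F S -> E `<=` S ->
  S `\` E `<=` args (reduct F E).
Proof.
move=> [SA Scf] ES; apply/fsubsetP => x /fsetDP [xS xE].
rewrite mem_args_reduct xE (fsubsetP SA) //=; apply/negP => /mem_plus [a aE ax].
exact: (negP (Scf a x (fsubsetP ES a aE) xS)).
Qed.

Lemma admissible_reduct_diff F S E : admissible F S -> E `<=` S ->
  admissible (reduct F E) (S `\` E).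
Proof.
move=> [Scf Sdef] ES; have SER := diff_sub_args_reduct Scf ES.
split; [split|] => //.
- move=> a b /fsetDP [aS _] /fsetDP [bS _]; apply/negP; rewrite mem_atts_reduct.
  by case/and3P => ab _ _; apply: (negP (Scf.2 a b aS bS)).
- move=> a b /fsetDP [bS bE]; rewrite mem_atts_reduct => /and3P [ab aR _].
  have /mem_plus [c cS ca] := Sdef a b bS ab.
  have cE : c \notin E.
    apply/negP => cE; move: aR; rewrite mem_args_reduct => /and3P [_ _ /negP []].
    by apply/mem_plus; exists c.
  apply/mem_plus; exists c; first by rewrite in_fsetD cE.
  by rewrite mem_atts_reduct ca aR (fsubsetP SER) // in_fsetD cE.
Qed.

Lemma stable_reduct F S E : stable F S -> E `<=` S -> stable (reduct F E) (S `\` E).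
Proof.
move=> [Sadm Scov] ES; have SER := diff_sub_args_reduct Sadm.1 ES.
split; first exact: admissible_reduct_diff.
apply/eqP; rewrite eqEfsubset fsubUset SER (plus_sub_args _ (@wf_reduct F E)) //=.
apply/fsubsetP => x xR; have := xR; rewrite mem_args_reduct => /and3P [xF xE xpE].
rewrite in_fsetU; move: xF; rewrite -Scov in_fsetU => /orP [xS|/mem_plus [c cS cx]].
  by rewrite in_fsetD xE xS.
have cE : c \notin E by apply: contra xpE => cE; apply/mem_plus; exists c.
apply/orP; right; apply/mem_plus; exists c; first by rewrite in_fsetD cE.
by rewrite mem_atts_reduct cx xR (fsubsetP SER) // in_fsetD cE cS.
Qed.

Lemma stable_eq0 G X : stable G X -> (X == fset0) = (args G == fset0).
Proof.
move=> [[[XG _] _] cov]; apply/eqP/eqP => [X0|G0].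
  by rewrite -cov X0 plus0 fsetU0.
by apply/eqP; rewrite -fsubset0 -G0.
Qed.

Lemma stable_of_reduct_eq0 F S : wf_AF F -> admissible F S ->
  args (reduct F S) = fset0 -> stable F S.
Proof.
move=> wf Sadm R0; split => //; apply/eqP.
rewrite eqEfsubset fsubUset Sadm.1.1 plus_sub_args //=.
apply/fsubsetP => x xF; apply: contraT; rewrite in_fsetU negb_or => /andP [xS xpS].
have : x \in args (reduct F S) by rewrite mem_args_reduct xF xS xpS.
by rewrite R0 inE.
Qed.

Lemma exists_initial_sub G X : admissible G X -> X != fset0 ->
  exists2 S, S `<=` X & initial G S.
Proof.
have [n] := ubnP #|`X|; elim: n X => // n IH X ltXn Xadm X0.
have [[S' [S'X S'0 S'adm]]|noS'] :=
  classic (exists S', [/\ S' `<` X, S' != fset0 & admissible G S']).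
  have [|S SS' Sinit] := IH S' _ S'adm S'0.
    exact: leq_trans (fproper_ltn_card S'X) ltXn.
  by exists S => //; apply: fsubset_trans SS' (fproper_sub S'X).
by exists X => //; split=> //; split=> // S' S'X S'0 S'adm; apply: noS'; exists S'.
Qed.

Lemma alpha_adm_initial G S :
  alpha_adm (IS_u G) (IS_uc G) (IS_c G) S <-> initial G S.
Proof.
split; first by case=> [[]|[[]|[]]].
move=> Sinit; have [m0|m0] := eqVneq (minus G S) fset0; first by left.
have [att|natt] := classic (exists S', initial G S' /\ attacks_set G S' S).
  by right; right.
by right; left.
Qed.

Lemma step_alpha_adm c c' : step (@alpha_adm T) c c' <->
  exists2 S, initial c.1 S & c' = (reduct c.1 S, c.2 `|` S).
Proof.
split => [[S [/alpha_adm_initial Sinit ->]]|[S Sinit ->]]; exists S => //.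
by split=> //; apply/alpha_adm_initial.
Qed.

Lemma reaches_reduct_admissible F c c' : wf_AF F -> reaches (@alpha_adm T) c c' ->
  c.1 = reduct F c.2 /\ admissible F c.2 -> c'.1 = reduct F c'.2 /\ admissible F c'.2.
Proof.
move=> wf; elim=> [[G E] c2 /step_alpha_adm [S /= [_ [Sadm _]] ->] /= [eG Eadm]|//|].
  subst G; split; first exact: reduct_reduct Sadm.1.1.
  exact: admissibleU_reduct.
by move=> c1 c2 c3 _ IH1 _ IH2 /IH1 /IH2.
Qed.

Lemma reaches_stable F S E : stable F S -> E `<=` S ->
  reaches (@alpha_adm T) (reduct F E, E) ((fset0, fset0), S).
Proof.
move=> Sst; have [n] := ubnP #|`S `\` E|; elim: n E => // n IH E ltn ES.
have [SE0|SEn0] := eqVneq (S `\` E) fset0.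
  have eES : E = S by apply/eqP; rewrite eqEfsubset ES -fsetD_eq0 SE0.
  have R0 : args (reduct F E) = fset0.
    by apply/eqP; rewrite -(stable_eq0 (stable_reduct Sst ES)) SE0.
  by rewrite reduct_eq0 // -eES; apply: rt_refl.
have SEadm := admissible_reduct_diff Sst.1 ES.
have [S' S'SE S'init] := exists_initial_sub SEadm SEn0.
have S'R : S' `<=` args (reduct F E).
  exact: fsubset_trans S'SE (diff_sub_args_reduct Sst.1.1 ES).
apply: (rt_trans _ _ _ (reduct F (E `|` S'), E `|` S')).
  by apply: rt_step; apply/step_alpha_adm; exists S'; rewrite //= reduct_reduct.
apply: IH; last by rewrite fsubUset ES (fsubset_trans S'SE (fsubsetDl _ _)).
rewrite -fsetDDl; exact: leq_trans (fproper_ltn_card (fproperD_neq0 S'SE S'init.1)) ltn.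
Qed.
End Serialisation.

Theorem theorem5 (T : choiceType) :
  serialisable (@stable T) (@alpha_adm T) (@beta_st T).
Proof.
move=> F wf S; split=> [Sst|[F' [run /eqP F'0]]].
  exists (fset0, fset0); split=> //.
  by rewrite -{1}(reduct0 wf); apply: reaches_stable (fsub0set _).
have [/= eF' Sadm] :=
  reaches_reduct_admissible wf run (conj (esym (reduct0 wf)) (admissible0 F)).
by apply: stable_of_reduct_eq0 wf Sadm _; rewrite -eF' F'0.
Qed.
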